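(* For every positive integer $n$ there exists a function $f_n:\mathbb Z\to\omega$ such that for all $l,d<\omega$ there exists $m<\omega$ such that for every $p:n\to\mathbb Z$ with $\max\{|p(k)-p(k')|\mid k<k'<n\}\le d$ there exists $i<m$ with $f_n(p(k)+i)=l$ for every $k<n$.
   Context: Here $n=\{0,\dots,n-1\}$ and $\omega$ is the set of natural numbers; for $n=1$ the maximum over the empty set is taken to be $0$. *)

From mathcomp Require Import all_boot all_order all_algebra.
Set Implicit Arguments. Unset Strict Implicit. Unset Printing Implicit Defensive.

From mathcomp Require Import all_boot all_order all_algebra.
From mathcomp Require Import zify ring.
From Stdlib Require Import ClassicalDescription.
Import Order.TTheory GRing.Theory Num.Theory.

Set Implicit Arguments.
Unset Strict Implicit.
Unset Printing Implicit Defensive.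

(* Expand integers in base B = n + 3 (B-adically, so negative integers have
   digits too) and let f x be the 2-adic valuation of 1 + the position of the
   first digit of x equal to B - 1.  Given l and d, pick v with
   v + 1 = 2^l (2d + 3).  A shift by less than B^(v+1) moves p 0 to
   (B - 1) B^v + B^d modulo B^(v+1); a further shift by less than B^d, found
   digit by digit by pigeonhole (there are only n < B points), removes the digit
   B - 1 from the lowest d digits of every p k.  Each shifted point is then
   congruent modulo B^(v+1) to (B - 1) B^v + y with y < 3 B^d, so its first
   digit B - 1 sits at position v and f takes the value l on it. *)

Definition digitn (B j X : nat) : nat := X %/ B ^ j %% B.

Lemma digitn_addMr B j v X q : 0 < B -> j < v ->
  digitn B j (X + q * B ^ v) = digitn B j X.
Proof.
move=> B_gt0 lt_jv; rewrite /digitn.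
have -> : B ^ v = B ^ (v - j).-1 * B * B ^ j.
  by rewrite -expnSr prednK ?subn_gt0 // -expnD subnK // ltnW.
by rewrite addnC mulnA divnMDl ?expn_gt0 ?B_gt0 // mulnA modnMDl.
Qed.

Lemma digitn_lead B v q X : q < B -> X < B ^ v -> digitn B v (q * B ^ v + X) = q.
Proof.
move=> lt_qB lt_X; have B_gt0 : 0 < B by apply: leq_ltn_trans lt_qB.
rewrite /digitn divnMDl ?expn_gt0 ?B_gt0 //.
by rewrite divn_small // addn0 modn_small.
Qed.

Lemma exists_addn_modn_neq B c (zs : seq nat) : c < B -> size zs < B ->
  exists2 t, t < B & forall z, z \in zs -> (z + t) %% B != c.
Proof.
move=> lt_cB lt_zsB; have B_gt0 : 0 < B by apply: leq_ltn_trans lt_cB.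
pose g z := (c + B - z %% B) %% B.
have gP z : (z + g z) %% B = c.
  rewrite /g modnDmr -modnDml.
  have lt_zB := ltn_pmod z B_gt0.
  have -> : z %% B + (c + B - z %% B) = c + B by lia.
  by rewrite modnDr modn_small.
have /hasP[t] : has (fun t => t \notin map g zs) (seq.iota 0 B).
  apply/negPn/negP => /hasPn all_bad.
  have sub_iota : {subset seq.iota 0 B <= map g zs} by move=> t /all_bad/negPn.
  have := uniq_leq_size (seq.iota_uniq 0 B) sub_iota.
  by rewrite size_iota size_map leqNgt lt_zsB.
rewrite mem_iota /= => lt_tB t_free; exists t => // z zs_z.
apply: contra t_free => /eqP tP; apply/mapP; exists z => //.
have : z + t == z + g z %[mod B] by rewrite tP gP.
by rewrite eqn_modDl modn_small // modn_small ?ltn_pmod => // /eqP.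
Qed.

Lemma exists_addn_digitn_neq B c (Xs : seq nat) w : c < B -> size Xs < B ->
  exists2 r, r < B ^ w & forall X j, X \in Xs -> j < w -> digitn B j (X + r) != c.
Proof.
move=> lt_cB lt_XsB; have B_gt0 : 0 < B by apply: leq_ltn_trans lt_cB.
elim: w => [|w [r lt_r rP]]; first by exists 0.
have [|t lt_tB tP] := @exists_addn_modn_neq B c [seq (X + r) %/ B ^ w | X <- Xs] lt_cB.
  by rewrite size_map.
exists (r + t * B ^ w) => [|X j Xs_X].
  have le_tB : t <= B.-1 by rewrite -ltnS prednK.
  by rewrite expnSr; nia.
rewrite ltnS leq_eqVlt addnA => /orP[/eqP->|lt_jw]; last by rewrite digitn_addMr ?rP.
by rewrite /digitn divnDMl ?expn_gt0 ?B_gt0 //; apply/tP/map_f.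
Qed.

(* The residue modulo B^(j+1) makes this the B-adic digit: every digit of -1 is B.-1. *)
Definition digitz (B j : nat) (x : int) : nat := digitn B j `|(x %% (B ^ j.+1)%:Z)%Z|.

Lemma digitz_congr B M j x X : 0 < B -> j < M ->
  (x = X%:Z %[mod (B ^ M)%:Z])%Z -> digitz B j x = digitn B j X.
Proof.
move=> B_gt0 lt_jM /eqP; rewrite eqz_mod_dvd /digitz => dvd_M.
have -> : (x %% (B ^ j.+1)%:Z)%Z = (X%:Z %% (B ^ j.+1)%:Z)%Z.
  by apply/eqP; rewrite eqz_mod_dvd (dvdz_trans _ dvd_M) // dvdzE /= dvdn_exp2l.
by rewrite modz_nat absz_nat /digitn expnS !modn_divl modn_mod.
Qed.

(* Junk value 0 when no digit is B.-1, e.g. for every x in 0 .. B.-2. *)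
Definition first_maxdigit (B : nat) (x : int) : nat :=
  match excluded_middle_informative (exists j, digitz B j x == B.-1) with
  | left ex_j => ex_minn ex_j
  | right _ => 0
  end.

Lemma first_maxdigitE B v x : digitz B v x = B.-1 ->
  (forall j, j < v -> digitz B j x != B.-1) -> first_maxdigit B x = v.
Proof.
move=> /eqP top_v below_v; rewrite /first_maxdigit.
case: excluded_middle_informative => [ex_j|]; last by case; exists v.
case: ex_minnP => j top_j min_j; apply/eqP; rewrite eqn_leq min_j // leqNgt.
by apply: contraL top_j => /below_v.
Qed.

Lemma first_maxdigit_lead B v x X : 0 < B -> X < B ^ v ->
  (forall j, j < v -> digitn B j X != B.-1) ->
  (x = (B.-1 * B ^ v + X)%:Z %[mod (B ^ v.+1)%:Z])%Z -> first_maxdigit B x = v.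
Proof.
move=> B_gt0 lt_X below_v x_mod; apply: first_maxdigitE => [|j lt_jv].
  by rewrite (digitz_congr B_gt0 (ltnSn v) x_mod) digitn_lead // prednK.
by rewrite (digitz_congr B_gt0 (leqW lt_jv) x_mod) addnC digitn_addMr ?below_v.
Qed.

Local Open Scope ring_scope.

Lemma exists_shift_first_maxdigit (I : finType) B v w (p : I -> int) a :
  (3 < B)%N -> (#|I| < B)%N -> (w < v)%N -> (forall k, `|p k - a| < (B ^ w)%:Z) ->
  exists2 i, (i < B ^ v.+1 + B ^ w)%N & forall k, first_maxdigit B (p k + i%:Z) = v.
Proof.
move=> B_gt3 lt_IB lt_wv p_near.
have B_gt0 : (0 < B)%N by apply: ltn_trans B_gt3.
pose s k := absz ((B ^ w)%:Z + (p k - a)).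
have sE k : (s k)%:Z = (B ^ w)%:Z + (p k - a).
  by rewrite gez0_abs //; have := p_near k; lia.
have lt_s k : (s k < 2 * B ^ w)%N by rewrite -ltz_nat sE; have := p_near k; lia.
have lt_maxB : (B.-1 < B)%N by rewrite prednK.
have size_s : (size [seq s k | k <- enum I] < B)%N by rewrite size_map -cardE.
have [r lt_r rP] := exists_addn_digitn_neq w lt_maxB size_s.
pose M := (B ^ v.+1)%N.
pose i0 := absz (((B.-1 * B ^ v + B ^ w)%N%:Z - a) %% M%:Z)%Z.
have i0E : i0%:Z = (((B.-1 * B ^ v + B ^ w)%N%:Z - a) %% M%:Z)%Z.
  by rewrite gez0_abs // modz_ge0 // -lt0n expn_gt0 B_gt0.
have lt_i0 : (i0 < M)%N by rewrite -ltz_nat i0E ltz_pmod // ltz_nat expn_gt0 B_gt0.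
exists (i0 + r)%N => [|k]; first by rewrite /M in lt_i0; lia.
have lt_sr : (s k + r < 3 * B ^ w)%N by have := lt_s k; lia.
apply: (@first_maxdigit_lead _ _ _ (s k + r)) => // [|j lt_jv|].
- apply: (leq_trans lt_sr); apply: (@leq_trans (B ^ w.+1)).
    by rewrite expnS leq_mul2r (ltnW B_gt3) orbT.
  by rewrite leq_pexp2l.
- have [lt_jw|le_wj] := ltnP j w; first by rewrite rP ?map_f ?mem_enum.
  have lt_digit : (digitn B j (s k + r) < 3)%N.
    apply: leq_ltn_trans (leq_mod _ _) _.
    have Bw_gt0 : (0 < B ^ w)%N by rewrite expn_gt0 B_gt0.
    apply: leq_ltn_trans (leq_div2l _ Bw_gt0 (leq_pexp2l B_gt0 le_wj)) _.
    by rewrite ltn_divLR.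
  by rewrite neq_ltn (leq_trans lt_digit) // -ltnS prednK.
- have -> : (B.-1 * B ^ v + (s k + r))%N%:Z =
    (B.-1 * B ^ v + B ^ w)%N%:Z - a + (p k + r%:Z).
    by rewrite !PoszD sE; ring.
  by rewrite PoszD i0E addrCA modzDml.
Qed.

Theorem corollary3p9 :
  forall n : nat, (0 < n)%N ->
  exists f : int -> nat,
    forall l d : nat, exists m : nat,
      forall p : 'I_n -> int,
        (forall k k' : 'I_n, (k < k')%N -> `|p k - p k'| <= d%:Z) ->
        exists2 i : nat, (i < m)%N & forall k : 'I_n, f (p k + i%:Z) = l.
Proof.
move=> [//|n] _; pose B := n.+4.
exists (fun x => logn 2 (first_maxdigit B x).+1) => l d.
pose v := (2 ^ l * (d.*2 + 3)).-1%N.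
have vE : v.+1 = (2 ^ l * (d.*2 + 3))%N by rewrite prednK // muln_gt0 expn_gt0 addn_gt0 orbT.
exists (B ^ v.+1 + B ^ d)%N => p p_close.
have lt_dv : (d < v)%N.
  have pos_2l : (0 < 2 ^ l)%N by rewrite expn_gt0.
  by rewrite -ltnS vE; nia.
have p_near k : `|p k - p ord0| < (B ^ d)%:Z.
  apply: (@le_lt_trans _ _ d%:Z); last by rewrite ltz_nat ltn_expl.
  have [k0|k_gt0] := posnP k; last by rewrite distrC p_close.
  by rewrite (_ : k = ord0) ?subrr //; apply: val_inj.
have lt_nB : (#|'I_n.+1| < B)%N by rewrite card_ord; lia.
have [//|i lt_i iP] := exists_shift_first_maxdigit (B := B) _ lt_nB lt_dv p_near.
exists i => // k; rewrite iP vE lognM ?expn_gt0 ?addn_gt0 ?orbT //.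
by rewrite pfactorK // logn_coprime ?addn0 // coprime2n oddD odd_double.
Qed.
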